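(* For every polynomial $f(\mathbf{x}) \in \mathbb{C}[x_1,\ldots,x_n]$ of degree $d$, we have $\mathrm{commRO}(f) \leq (d+1)^2 \cdot \mathrm{DPD}(f)$.
   Context: For $f \in \mathbb{C}[x_1,\ldots,x_n]$, the dimension of partial derivatives is $\mathrm{DPD}(f) := \dim_{\mathbb{C}} \mathrm{span}_{\mathbb{C}}\{\partial_{\mathbf{e}} f : \mathbf{e} \in \mathbb{N}^n\}$, where $\partial_{\mathbf{e}} f$ is the partial derivative of $f$ with respect to the monomial $x_1^{e_1}\cdots x_n^{e_n}$ (so $\mathbf{e}=\mathbf{0}$ gives $f$ itself). A read-once oblivious ABP (ROABP) of width $w$ computing an $n$-variate polynomial $f$ of individual degree at most $d$ consists of a permutation $\sigma$ of $[n]$, matrices $A_{j,k} \in \mathbb{C}^{w\times w}$ for $j\in[n]$, $0\le k\le d$, and vectors $\mathbf{u},\mathbf{v}\in\mathbb{C}^w$ such that $f(\mathbf{x}) = \mathbf{u}^{T} M_{\sigma(1)}(x_{\sigma(1)}) \cdots M_{\sigma(n)}(x_{\sigma(n)}) \mathbf{v}$, where $M_j(x_j) = \sum_{k=0}^{d} A_{j,k} x_j^k$. The $A_{j,k}$ are its coefficient matrices. A commutative ROABP is an ROABP whose coefficient matrices all pairwise commute. $\mathrm{commRO}(f)$ denotes the smallest $w$ such that some width-$w$ commutative ROABP computes $f$. *)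

From HB Require Import structures.
From mathcomp Require Import all_boot all_algebra all_fingroup.
From mathcomp Require Import reals complex.
From mathcomp Require Import mpoly.
From Stdlib Require Import ClassicalEpsilon.

Set Implicit Arguments.
Unset Strict Implicit.
Unset Printing Implicit Defensive.

Import GRing.Theory.
Local Open Scope ring_scope.

Definition pbool (P : Prop) : bool :=
  if excluded_middle_informative P then true else false.

Lemma pboolP (P : Prop) : reflect P (pbool P).
Proof. rewrite /pbool; case: excluded_middle_informative => H; by constructor. Qed.

(* The least natural number satisfying P, or 0 if none exists. *)
Definition least_nat (P : nat -> Prop) : nat :=
  match excluded_middle_informative (exists k, pbool (P k)) with
  | left H => ex_minn H
  | right _ => 0%N
  end.

Section Defs.
Variables (F : fieldType) (n : nat).

Definition derivs_spanned_by (f : {mpoly F[n]}) (k : nat) : Prop :=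
  exists g : 'I_k -> {mpoly F[n]},
    forall e : 'X_{1..n}, exists c : 'I_k -> F,
      mderivm e f = \sum_(i < k) c i *: g i.

(* DPD(f) = dim span{ d_e f : e in N^n } = least size of a spanning family. *)
Definition DPD (f : {mpoly F[n]}) : nat := least_nat (derivs_spanned_by f).

Definition roabp_layer (w D : nat) (A : 'I_n -> 'I_D.+1 -> 'M[F]_w) (j : 'I_n)
  : 'M[{mpoly F[n]}]_w :=
  \sum_(k < D.+1) map_mx (fun c : F => c%:MP * 'X_j ^+ k) (A j k).

Definition roabp_poly (w D : nat) (s : {perm 'I_n})
  (A : 'I_n -> 'I_D.+1 -> 'M[F]_w) (u v : 'cV[F]_w) : {mpoly F[n]} :=
  ((map_mx (fun c : F => c%:MP) u)^T
     *m (\prod_(i < n) roabp_layer A (s i))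
     *m map_mx (fun c : F => c%:MP) v) ord0 ord0.

Definition has_commROABP (f : {mpoly F[n]}) (w : nat) : Prop :=
  exists (D : nat) (s : {perm 'I_n}) (A : 'I_n -> 'I_D.+1 -> 'M[F]_w)
         (u v : 'cV[F]_w),
    (forall (j1 j2 : 'I_n) (k1 k2 : 'I_D.+1),
        A j1 k1 *m A j2 k2 = A j2 k2 *m A j1 k1)
    /\ f = roabp_poly s A u v.

Definition commRO (f : {mpoly F[n]}) : nat := least_nat (has_commROABP f).

End Defs.

From HB Require Import structures.
From mathcomp Require Import all_boot all_algebra all_fingroup.
From mathcomp Require Import reals complex.
From mathcomp Require Import mpoly.
From Stdlib Require Import ClassicalEpsilon.
Import GRing.Theory Num.Theory.
Local Open Scope ring_scope.

Set Implicit Arguments.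
Unset Strict Implicit.

(* In characteristic 0 we even get commRO f <= DPD f.  The span V of all
   partial derivatives of f is stable under each d/dx_j; in a basis h of V
   these derivations act by matrices B_j, which commute because partial
   derivatives do.  Writing f = c . h, Taylor's formula at 0 gives
   f = sum_t x^t/t! (d^t f)(0) = c . (prod_j sum_k x_j^k B_j^k / k!) . h(0),
   a commutative ROABP of width dim V = DPD f. *)

Section MpolyFacts.
Variables (R : nzRingType) (n : nat).
Implicit Types (p : {mpoly R[n]}) (e : 'X_{1..n}).

Lemma mcoeff0_mderivm p e : (mderivm e p)@_0 = p@_e *+ \prod_(i < n) (e i)`!.
Proof.
rewrite mcoeff_mderivm addm0; congr (_ *+ _).
by apply: eq_bigr => i _; rewrite ffactnn.
Qed.

Lemma mderivm_eq0 p e : (msize p <= mdeg e)%N -> mderivm e p = 0.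
Proof.
move=> le_pe; apply/mpolyP => m; rewrite mcoeff_mderivm mcoeff0.
rewrite memN_msupp_eq0 ?mul0rn //; apply: msize_mdeg_ge.
by rewrite mdegD (leq_trans le_pe) ?leq_addr.
Qed.

Lemma msize_mderivm p e : (msize (mderivm e p) <= msize p)%N.
Proof.
rewrite mderivmE; apply: leq_trans (msize_sum _ _ _) _.
apply/bigmax_leqP_seq => m m_p _; apply: leq_trans (msizeZ_le _ _) _.
by rewrite msizeX; apply: leq_ltn_trans (mdegB _ _) (msize_mdeg_lt m_p).
Qed.

Definition box_mnm D (t : {ffun 'I_n -> 'I_D.+1}) : 'X_{1..n} :=
  [multinom (t i : nat) | i < n].

Lemma mpoly_boxE D p : (msize p <= D.+1)%N ->
  p = \sum_(t : {ffun 'I_n -> 'I_D.+1}) p@_(box_mnm t) *: 'X_[box_mnm t].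
Proof.
move=> le_pD; apply/mpolyP => m; rewrite raddf_sum /=.
under eq_bigr => t _ do rewrite mcoeffZ mcoeffX.
have [/forallP m_le|] := boolP [forall i, (m i <= D)%N].
  pose t0 : {ffun 'I_n -> 'I_D.+1} := [ffun i => inord (m i)].
  have box_t0 : box_mnm t0 = m.
    by apply/mnmP => i; rewrite mnmE ffunE inordK ?ltnS.
  rewrite (bigD1 t0) //= box_t0 eqxx mulr1 big1 ?addr0 // => t t_neq.
  case: eqP => [box_t|]; last by rewrite mulr0.
  case/eqP: t_neq; apply/ffunP => i; apply/val_inj.
  by rewrite ffunE /= -box_t mnmE inord_val.
rewrite negb_forall; case/existsP => i; rewrite -ltnNge => lt_Dmi.
rewrite big1 => [|t _]; last first.
  case: eqP => [box_t|]; last by rewrite mulr0.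
  by move: lt_Dmi; rewrite -box_t mnmE ltnNge -ltnS ltn_ord.
apply/memN_msupp_eq0/msize_mdeg_ge; apply: (leq_trans le_pD).
by rewrite mdegE (bigD1 i) //= (leq_trans lt_Dmi) ?leq_addr.
Qed.

End MpolyFacts.

Lemma prod_scalemx (R : comNzRingType) w I (r : seq I) (a : I -> R)
    (M : I -> 'M[R]_w) :
  \prod_(i <- r) (a i *: M i) = (\prod_(i <- r) a i) *: \prod_(i <- r) M i.
Proof.
elim: r => [|i r IHr]; first by rewrite !big_nil scale1r.
by rewrite !big_cons IHr -!mulmxE -scalemxAl -scalemxAr scalerA.
Qed.

Section ROABPExpansion.
Variables (F : fieldType) (n w D : nat) (A : 'I_n -> 'I_D.+1 -> 'M[F]_w).

Local Notation C := (map_mx (fun c : F => c%:MP_[n])).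

Lemma mpolyC_mxM : {morph C : M N / (M * N : 'M[F]_w) >-> M * N}.
Proof. by move=> M N; rewrite -!mulmxE map_mxM. Qed.

Lemma roabp_layers_expand :
  \prod_(j < n) roabp_layer A j = \sum_(t : {ffun 'I_n -> 'I_D.+1})
     'X_[box_mnm t] *: C (\prod_(j < n) A j (t j)).
Proof.
have layerE j : roabp_layer A j = \sum_(k < D.+1) 'X_j ^+ k *: C (A j k).
  by apply: eq_bigr => k _; apply/matrixP => a b; rewrite !mxE mulrC.
under eq_bigr do rewrite layerE.
rewrite bigA_distr_bigA; apply: eq_bigr => t _; rewrite prod_scalemx.
rewrite (big_morph _ mpolyC_mxM (map_mx1 _ _)).
rewrite (mpolyXE _ 1%g); congr (_ *: _).
by apply: eq_bigr => j _; rewrite perm1 mnmE.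
Qed.

Lemma roabp_poly_expand (u : 'rV[F]_w) (v : 'cV[F]_w) :
  roabp_poly 1%g A u^T v = \sum_(t : {ffun 'I_n -> 'I_D.+1})
     (u *m \prod_(j < n) A j (t j) *m v) 0 0 *: 'X_[box_mnm t].
Proof.
rewrite /roabp_poly map_trmx trmxK; under eq_bigr do rewrite perm1.
rewrite roabp_layers_expand mulmx_sumr mulmx_suml summxE; apply: eq_bigr => t _.
by rewrite -scalemxAr -scalemxAl mxE -!map_mxM mxE mulrC mul_mpolyC.
Qed.

End ROABPExpansion.

Section TaylorROABP.
Variables (F : fieldType) (n w : nat) (h : 'I_w -> {mpoly F[n]}).

Definition lincomb (x : 'rV[F]_w) : {mpoly F[n]} := \sum_a x 0 a *: h a.

Lemma mcoeff0_lincomb x : (lincomb x)@_0 = (x *m \col_a (h a)@_0) 0 0.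
Proof.
by rewrite raddf_sum mxE; apply: eq_bigr => a _; rewrite /= mcoeffZ mxE.
Qed.

Lemma msize_lincomb D x :
  (forall a, msize (h a) <= D)%N -> (msize (lincomb x) <= D)%N.
Proof.
move=> le_hD; apply: leq_trans (msize_sum _ _ _) _.
apply/bigmax_leqP_seq => a _ _.
exact: leq_trans (msizeZ_le _ _) (le_hD a).
Qed.

Variable B : 'I_n -> 'M[F]_w.
Hypothesis mderiv_h : forall j a, mderiv j (h a) = \sum_b B j a b *: h b.

Lemma lincomb_mulmx x j : lincomb (x *m B j) = mderiv j (lincomb x).
Proof.
rewrite /lincomb raddf_sum /=.
under [RHS]eq_bigr => a _ do rewrite mderivZ mderiv_h scaler_sumr.
rewrite exchange_big /=; apply: eq_bigr => b _.
by rewrite mxE scaler_suml; apply: eq_bigr => a _; rewrite scalerA.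
Qed.

Lemma lincomb_mulmx_prod x (t : 'I_n -> nat) (r : seq 'I_n) :
  lincomb (x *m \prod_(j <- r) B j ^+ t j)
  = mderivm (\sum_(j <- r) U_(j) *+ t j) (lincomb x).
Proof.
elim: r x => [|j r IHr] x; first by rewrite !big_nil mulmx1 mderivm0m.
rewrite !big_cons -mulmxE mulmxA IHr mderivmDm mderivn_iter.
congr (mderivm _ _).
elim: (t j) => [|k IHk]; first by rewrite expr0 mulmx1.
by rewrite exprSr -mulmxE mulmxA lincomb_mulmx IHk.
Qed.

Hypothesis char0F : has_pchar0 F.
Variable D : nat.

Definition taylor_mx (j : 'I_n) (k : 'I_D.+1) : 'M[F]_w :=
  (k`!%:R)^-1 *: B j ^+ k.

Lemma mcoeff_lincomb x (t : {ffun 'I_n -> 'I_D.+1}) :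
  (lincomb x)@_(box_mnm t)
  = (x *m \prod_j taylor_mx j (t j) *m \col_a (h a)@_0) 0 0.
Proof.
rewrite prod_scalemx -scalemxAr -scalemxAl mxE -mcoeff0_lincomb.
rewrite lincomb_mulmx_prod mcoeff0_mderivm -mulr_natr natr_prod.
have -> : (\sum_(j <- index_enum 'I_n) U_(j) *+ t j)%MM = box_mnm t.
  by rewrite [RHS]multinomUE_id; apply: eq_bigr => j _; rewrite mnmE.
have -> : \prod_j ((box_mnm t j)`!)%:R = \prod_j ((t j)`!)%:R :> F.
  by apply: eq_bigr => j _; rewrite mnmE.
rewrite prodfV mulrCA mulVf ?mulr1 // prodf_seq_neq0; apply/allP => j _.
by rewrite (pcharf0P F).1 // -lt0n fact_gt0.
Qed.

Lemma lincomb_roabp x : (forall a, msize (h a) <= D.+1)%N ->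
  lincomb x = roabp_poly 1%g taylor_mx x^T (\col_a (h a)@_0).
Proof.
move=> le_hD; rewrite roabp_poly_expand {1}(mpoly_boxE (msize_lincomb x le_hD)).
by apply: eq_bigr => t _; rewrite mcoeff_lincomb.
Qed.

Hypothesis B_comm : forall j1 j2, B j1 *m B j2 = B j2 *m B j1.

Lemma taylor_mx_comm j1 j2 k1 k2 :
  taylor_mx j1 k1 *m taylor_mx j2 k2 = taylor_mx j2 k2 *m taylor_mx j1 k1.
Proof.
rewrite -!scalemxAl -!scalemxAr !scalerA mulrC; congr (_ *: _).
have B12 : GRing.comm (B j1) (B j2) by rewrite /GRing.comm -!mulmxE B_comm.
by have := commrX k1 (commr_sym (commrX k2 B12)); rewrite /GRing.comm -!mulmxE.
Qed.

Lemma has_commROABP_lincomb x : (forall a, msize (h a) <= D.+1)%N ->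
  has_commROABP (lincomb x) w.
Proof.
move=> le_hD; exists D, 1%g, taylor_mx, x^T, (\col_a (h a)@_0).
by split; [exact: taylor_mx_comm | exact: lincomb_roabp].
Qed.

End TaylorROABP.

(* The derivatives of f live among the polynomials of size at most msize f,
   which we encode by their coefficient rows over the monomials of degree
   < msize f; d^e f vanishes for every other e, so the rows of derivs_mx
   span all derivatives of f. *)
Section DerivativeSpace.
Variables (F : fieldType) (n : nat) (f : {mpoly F[n]}).

Let T := 'X_{1..n < msize f}.
Let N := #|{: T}|.
Let mnm_of (i : 'I_N) : 'X_{1..n} := bmnm (enum_val i : T).

Definition coord (p : {mpoly F[n]}) : 'rV[F]_N := \row_i p@_(mnm_of i).

Fact coord_is_linear : linear coord.
Proof. by move=> a p q; apply/rowP => i; rewrite !mxE mcoeffD mcoeffZ. Qed.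

HB.instance Definition _ :=
  GRing.isLinear.Build F {mpoly F[n]} 'rV[F]_N _ coord coord_is_linear.

Definition decode (y : 'rV[F]_N) : {mpoly F[n]} :=
  \sum_i y 0 i *: 'X_[mnm_of i].

Fact decode_is_linear : linear decode.
Proof.
move=> a y z; rewrite /decode scaler_sumr -big_split; apply: eq_bigr => i _.
by rewrite !mxE scalerDl scalerA.
Qed.

HB.instance Definition _ :=
  GRing.isLinear.Build F 'rV[F]_N {mpoly F[n]} _ decode decode_is_linear.

Lemma coord_decode : cancel decode coord.
Proof.
move=> y; apply/rowP => j; rewrite mxE raddf_sum (bigD1 j) //=.
rewrite mcoeffZ mcoeffX eqxx mulr1.
rewrite big1 ?addr0 // => i i_neq; rewrite mcoeffZ mcoeffX.
by rewrite (inj_eq val_inj) (inj_eq enum_val_inj) (negbTE i_neq) mulr0.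
Qed.

Lemma decode_coord p : (msize p <= msize f)%N -> decode (coord p) = p.
Proof.
move=> le_pf; rewrite [RHS](mpolywE le_pf) /decode.
rewrite (reindex (fun i : 'I_N => enum_val i : T)) /=; last first.
  exact/onW_bij/enum_val_bij.
by apply: eq_bigr => i _; rewrite mxE.
Qed.

Lemma msize_decode y : (msize (decode y) <= msize f)%N.
Proof.
apply: leq_trans (msize_sum _ _ _) _; apply/bigmax_leqP_seq => i _ _.
by apply: leq_trans (msizeZ_le _ _) _; rewrite msizeX bmdeg.
Qed.

Definition derivs_mx : 'M[F]_N := \matrix_i coord (mderivm (mnm_of i) f).

Lemma coord_mderivm_sub e : (coord (mderivm e f) <= derivs_mx)%MS.
Proof.
have [lt_ef|le_fe] := ltnP (mdeg e) (msize f); last first.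
  by rewrite mderivm_eq0 // linear0 sub0mx.
have := row_sub (enum_rank (BMultinom lt_ef : T)) derivs_mx.
by rewrite rowK /mnm_of enum_rankK.
Qed.

Definition in_derivs (p : {mpoly F[n]}) : bool :=
  (msize p <= msize f)%N && (coord p <= derivs_mx)%MS.

Lemma in_derivs_mderivm e : in_derivs (mderivm e f).
Proof. by rewrite /in_derivs msize_mderivm coord_mderivm_sub. Qed.

Lemma decode_mulmx m (u : 'rV[F]_m) (M : 'M[F]_(m, N)) :
  decode (u *m M) = \sum_a u 0 a *: decode (row a M).
Proof.
by rewrite mulmx_sum_row linear_sum; under eq_bigr do rewrite linearZ.
Qed.

Lemma in_derivs_mderiv j p : in_derivs p -> in_derivs (mderiv j p).
Proof.
case/andP=> le_pf /submxP[y def_p]; apply/andP; split.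
  by rewrite -mderivmU1m (leq_trans (msize_mderivm _ _)).
have -> : p = \sum_i y 0 i *: mderivm (mnm_of i) f.
  rewrite -(decode_coord le_pf) def_p decode_mulmx; apply: eq_bigr => i _.
  by rewrite rowK decode_coord ?msize_mderivm.
rewrite [mderiv j _]raddf_sum linear_sum; apply: summx_sub => i _.
rewrite /= mderivZ linearZ.
by rewrite scalemx_sub // -mderivmU1m -mderivmDm coord_mderivm_sub.
Qed.

Let W := row_base derivs_mx.
Let r := \rank derivs_mx.

Definition derivs_basis (a : 'I_r) : {mpoly F[n]} := decode (row a W).

Lemma lincomb_derivs_basis x : lincomb derivs_basis x = decode (x *m W).
Proof. by rewrite decode_mulmx. Qed.

Lemma lincomb_derivs_basis_inj : injective (lincomb derivs_basis).
Proof.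
move=> x y; rewrite !lincomb_derivs_basis => /(congr1 coord).
rewrite !coord_decode.
exact/row_free_inj/row_base_free.
Qed.

Lemma in_derivs_basis a : in_derivs (derivs_basis a).
Proof.
rewrite /in_derivs msize_decode coord_decode.
by rewrite -(eq_row_base derivs_mx) row_sub.
Qed.

Lemma in_derivsE p :
  in_derivs p -> p = lincomb derivs_basis (coord p *m pinvmx W).
Proof.
case/andP=> le_pf p_sub; rewrite lincomb_derivs_basis mulmxKpV ?decode_coord //.
by rewrite eq_row_base.
Qed.

Definition deriv_mx (j : 'I_n) : 'M[F]_r :=
  \matrix_a (coord (mderiv j (derivs_basis a)) *m pinvmx W).

Lemma mderiv_derivs_basis j a :
  mderiv j (derivs_basis a) = \sum_b deriv_mx j a b *: derivs_basis b.
Proof.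
rewrite {1}(in_derivsE (in_derivs_mderiv j (in_derivs_basis a))).
by apply: eq_bigr => b _; rewrite [in RHS]mxE mxE.
Qed.

Lemma deriv_mx_comm j k : deriv_mx j *m deriv_mx k = deriv_mx k *m deriv_mx j.
Proof.
apply/eqP/mulmxP => x; rewrite !mulmxA; apply: lincomb_derivs_basis_inj.
by rewrite !(lincomb_mulmx mderiv_derivs_basis) mderiv_comm.
Qed.

Lemma has_commROABP_rank_derivs : has_pchar0 F -> has_commROABP f r.
Proof.
move=> char0F; have := in_derivs_mderivm 0; rewrite mderivm0m => /in_derivsE ->.
have le_basis a : (msize (derivs_basis a) <= (msize f).+1)%N.
  exact/leqW/msize_decode.
exact: (has_commROABP_lincomb mderiv_derivs_basis char0F deriv_mx_comm
         _ le_basis).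
Qed.

Lemma derivs_spanned_by_rank : derivs_spanned_by f r.
Proof.
exists derivs_basis => e.
exists (fun a => (coord (mderivm e f) *m pinvmx W) 0 a).
exact: in_derivsE (in_derivs_mderivm e).
Qed.

Lemma rank_derivs_min k : derivs_spanned_by f k -> (r <= k)%N.
Proof.
case=> g span_g; pose G := \matrix_(l < k) coord (g l).
suff sub_G : (derivs_mx <= G)%MS.
  by rewrite (leq_trans (mxrankS sub_G)) ?rank_leq_row.
apply/row_subP => i; rewrite rowK; have [c ->] := span_g (mnm_of i).
rewrite linear_sum; apply: summx_sub => l _; rewrite linearZ scalemx_sub //.
by have := row_sub l G; rewrite rowK.
Qed.

End DerivativeSpace.

Lemma least_nat_le (P : nat -> Prop) k : P k -> (least_nat P <= k)%N.
Proof.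
move=> Pk; rewrite /least_nat.
case: excluded_middle_informative => [exP|]; last first.
  by case; exists k; apply/pboolP.
by case: ex_minnP => m _; apply; apply/pboolP.
Qed.

Lemma least_natP (P : nat -> Prop) k : P k -> P (least_nat P).
Proof.
move=> Pk; rewrite /least_nat.
case: excluded_middle_informative => [exP|]; last first.
  by case; exists k; apply/pboolP.
by case: ex_minnP => m /pboolP.
Qed.

Lemma DPDE (F : fieldType) n (f : {mpoly F[n]}) : DPD f = \rank (derivs_mx f).
Proof.
have span_f := derivs_spanned_by_rank f.
apply/eqP; rewrite eqn_leq least_nat_le //=.
exact: rank_derivs_min (least_natP span_f).
Qed.

Lemma commRO_le_DPD (F : fieldType) n (f : {mpoly F[n]}) :
  has_pchar0 F -> (commRO f <= DPD f)%N.
Proof.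
by move=> char0F; rewrite DPDE; apply/least_nat_le/has_commROABP_rank_derivs.
Qed.

Unset Implicit Arguments.

Theorem corollary1p5 (R : realType) (n : nat) (f : {mpoly R[i][n]}) :
  (commRO f <= ((msize f).-1).+1 ^ 2 * DPD f)%N.
Proof.
apply: leq_trans (commRO_le_DPD f (pchar_num _)) _.
by rewrite leq_pmull // expn_gt0.
Qed.
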